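(* Let $R>0$, let $E\subset\mathbb{R}^d$ be a body, $a\in\partial\, co_R(E)$, and let $B=B(o,R)$ be an open ball of radius $R$ centered at the origin which $R$-supports $co_R(E)$ at $a$, i.e. $a\in\partial B$ and $B\cap co_R(E)=\emptyset$. Let $S=\partial B$, $\mathfrak F=E\cap S$, $F=\{\lambda x:\lambda\ge0,\ x\in\mathfrak F\}$ and $C=co(F)$. Assume that $C$ is pointed, i.e. $C\cap(-C)=\{o\}$, and that $a\notin C$. Then: (i) there exists $v\in S^{d-1}$ such that $\langle a,v\rangle>0$ and $\langle x,v\rangle<0$ for all $x\in\mathfrak F$; (ii) for this $v$, setting $B_t=\{x:|x-tv|<R\}$, for all sufficiently small $t>0$ one has $a\in B_t$ and $B_t\cap E=\emptyset$.
   Context: A body is a nonempty closed subset of $\mathbb{R}^d$; $o$ is the origin, $S^{d-1}$ the unit sphere, $co(\cdot)$ the convex hull. Fix $R>0$. The $R$-hulloid of a body $E$ is $co_R(E)=\bigcap\{\mathbb{R}^d\setminus B : B \text{ an open ball of radius } R,\ B\cap E=\emptyset\}$ (equal to $\mathbb{R}^d$ if no such ball exists). *)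

(* R^d is modelled as row vectors 'rV[R]_d over R : realType,
   with the Euclidean inner product and norm defined below; topology (closed, closure)
   is the library's matrix topology, which coincides with the Euclidean one. *)
From HB Require Import structures.
From mathcomp Require Import all_boot all_order all_algebra.
From mathcomp Require Import all_classical all_reals all_analysis.
Set Implicit Arguments. Unset Strict Implicit. Unset Printing Implicit Defensive.
Import Order.TTheory GRing.Theory Num.Theory.
Import numFieldNormedType.Exports.
Local Open Scope classical_set_scope.
Local Open Scope ring_scope.

Section Defs.
Variables (R : realType) (d : nat).
Notation V := 'rV[R]_d.

Definition dotv (u v : V) : R := \sum_(i < d) u ord0 i * v ord0 i.
Definition enorm (u : V) : R := Num.sqrt (dotv u u).

Definition eball (c : V) (r : R) : set V := [set x | enorm (x - c) < r].

Definition unit_sphere : set V := [set v | enorm v = 1].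

Definition body (E : set V) : Prop := E !=set0 /\ closed E.

Definition bdry (A : set V) : set V := closure A `&` closure (~` A).

Definition hulloid (r : R) (E : set V) : set V :=
  \bigcap_(c in [set c | eball c r `&` E = set0]) ~` eball c r.

Definition convhull (A : set V) : set V :=
  [set x | exists n (w : 'I_n -> R) (p : 'I_n -> V),
     (forall i, 0 <= w i) /\ \sum_(i < n) w i = 1 /\ (forall i, A (p i)) /\
     x = \sum_(i < n) w i *: p i].

Definition ray_cone (A : set V) : set V :=
  [set y | exists lam x, 0 <= lam /\ A x /\ y = lam *: x].

Definition pointed (C : set V) : Prop := [set x | C x /\ C (- x)] = [set 0].

End Defs.

From HB Require Import structures.
From mathcomp Require Import all_boot all_order all_algebra.
From mathcomp Require Import all_classical all_reals all_analysis.
From mathcomp Require Import lra.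
Import Order.TTheory GRing.Theory Num.Theory.
Import numFieldNormedType.Exports.
Local Open Scope classical_set_scope.
Local Open Scope ring_scope.
Set Implicit Arguments. Unset Strict Implicit. Unset Printing Implicit Defensive.

(** For (i), Gordan's alternative: were [0] a convex combination of points of
    [FF] and of [-a], then either [a] would be a nonnegative combination of
    points of [FF], i.e. [a \in C], or some [y != 0] would have [y] and [-y] in
    [C], contradicting pointedness. By Caratheodory the convex hull of the
    compact set [FF ∪ {-a}] is compact, so it has a point [z] of minimal norm,
    and [v = - z / |z|] has negative inner product with all of [FF ∪ {-a}].

    For (ii), [|x - t v|^2 = |x|^2 - 2 t <x, v> + t^2]. Points of [E] lie
    outside [B], and by compactness the points of [E] with [<x, v> >= 0] near
    the sphere stay a fixed distance away from it, because on the sphere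
    [<x, v> < 0]; so a small shift along [v] keeps [E] outside the ball, while
    [a] enters it since [<a, v> > 0]. *)

Section Euclidean.
Variables (R : realType) (d : nat).
Notation V := 'rV[R]_d.
Implicit Types (u v w x y z : V) (A E G : set V).

Lemma dotvC u v : dotv u v = dotv v u.
Proof. by apply: eq_bigr => i _; rewrite mulrC. Qed.

Lemma dotvDl u w v : dotv (u + w) v = dotv u v + dotv w v.
Proof. by rewrite /dotv -big_split; apply: eq_bigr => i _; rewrite mxE mulrDl. Qed.

Lemma dotvZl (k : R) u v : dotv (k *: u) v = k * dotv u v.
Proof. by rewrite /dotv mulr_sumr; apply: eq_bigr => i _; rewrite mxE mulrA. Qed.

Lemma dotvNl u v : dotv (- u) v = - dotv u v.
Proof. by rewrite -scaleN1r dotvZl mulN1r. Qed.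

Lemma dotvBl u w v : dotv (u - w) v = dotv u v - dotv w v.
Proof. by rewrite dotvDl dotvNl. Qed.

Lemma dotv0l v : dotv 0 v = 0.
Proof. by rewrite -(scale0r 0) dotvZl mul0r. Qed.

Lemma dotvDr u w v : dotv v (u + w) = dotv v u + dotv v w.
Proof. by rewrite dotvC dotvDl !(dotvC v). Qed.

Lemma dotvZr (k : R) u v : dotv v (k *: u) = k * dotv v u.
Proof. by rewrite dotvC dotvZl dotvC. Qed.

Lemma dotvNr u v : dotv v (- u) = - dotv v u.
Proof. by rewrite dotvC dotvNl dotvC. Qed.

Lemma dotvBr u w v : dotv v (u - w) = dotv v u - dotv v w.
Proof. by rewrite dotvDr dotvNr. Qed.

Lemma dotv0r v : dotv v 0 = 0.
Proof. by rewrite dotvC dotv0l. Qed.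

Lemma dotvv_ge0 v : 0 <= dotv v v.
Proof. by apply: sumr_ge0 => i _; rewrite -expr2 sqr_ge0. Qed.

Lemma dotvv_eq0 v : (dotv v v == 0) = (v == 0).
Proof.
apply/idP/idP => [|/eqP ->]; last by rewrite dotv0l.
rewrite psumr_eq0 => [/allP v0|i _]; last by rewrite -expr2 sqr_ge0.
apply/eqP/rowP => i; rewrite mxE.
by have := v0 i (mem_index_enum _); rewrite -expr2 sqrf_eq0 => /eqP.
Qed.

Lemma dotvv_gt0 v : v != 0 -> 0 < dotv v v.
Proof. by rewrite lt_def dotvv_ge0 dotvv_eq0 andbT. Qed.

Lemma enorm_ge0 v : 0 <= enorm v.
Proof. exact: sqrtr_ge0. Qed.

Lemma enorm_sq v : enorm v ^+ 2 = dotv v v.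
Proof. by rewrite /enorm sqr_sqrtr // dotvv_ge0. Qed.

Lemma enorm0 : enorm (0 : V) = 0.
Proof. by rewrite /enorm dotv0l sqrtr0. Qed.

Lemma enorm_lt_sq v r : enorm v < r <-> 0 < r /\ dotv v v < r ^+ 2.
Proof.
have r_ge0 : enorm v < r -> 0 <= r by move/(le_lt_trans (enorm_ge0 v))/ltW.
split => [lt_vr|[r0]].
  by split; [exact: le_lt_trans (enorm_ge0 v) lt_vr|
             rewrite -enorm_sq ltr_pXn2r // ?nnegrE ?enorm_ge0 ?r_ge0].
by rewrite -enorm_sq ltr_pXn2r // ?nnegrE ?enorm_ge0 ?ltW.
Qed.

Lemma enorm_eq_sq v r : 0 <= r -> enorm v = r <-> dotv v v = r ^+ 2.
Proof.
move=> r0; split => [<-|vr]; first by rewrite enorm_sq.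
by rewrite /enorm vr sqrtr_sqr ger0_norm.
Qed.

Lemma unit_sphereE v : unit_sphere v <-> dotv v v = 1.
Proof. by rewrite /unit_sphere /= enorm_eq_sq ?expr1n. Qed.

Lemma cauchy_schwarz_unit x v : unit_sphere v -> dotv x v ^+ 2 <= dotv x x.
Proof.
move=> /unit_sphereE v1; have := dotvv_ge0 (x - dotv x v *: v).
rewrite dotvBl !dotvBr !dotvZl !dotvZr v1 (dotvC v x) expr2; lra.
Qed.

Lemma dotv_le_enorm x v : unit_sphere v -> dotv x v <= enorm x.
Proof.
move=> v1; apply: le_trans (ler_norm _) _.
by rewrite -sqrtr_sqr ler_sqrt ?dotvv_ge0 // cauchy_schwarz_unit.
Qed.

Lemma continuous_dotvl y : continuous (fun x : V => dotv x y).
Proof.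
rewrite /dotv; apply: (@continuous_big _ _ +%R 0 xpredT _ _ _ _).
  exact: add_continuous.
by move=> i _ x; apply: continuousM; [exact: coord_continuous|exact: cst_continuous].
Qed.

Lemma continuous_dotvv : continuous (fun x : V => dotv x x).
Proof.
rewrite /dotv; apply: (@continuous_big _ _ +%R 0 xpredT _ _ _ _).
  exact: add_continuous.
by move=> i _ x; apply: continuousM; exact: coord_continuous.
Qed.

Lemma closed_dotvl_ge y (c : R) : closed [set x | c <= dotv x y].
Proof.
apply: (@preimage_closed _ _ (fun x : V => dotv x y) [set r | c <= r]).
  by move=> x _; exact: continuous_dotvl.
exact: closed_ge.
Qed.

Lemma closed_dotvv_le (c : R) : closed [set x : V | dotv x x <= c].
Proof.
apply: (@preimage_closed _ _ (fun x : V => dotv x x) [set r | r <= c]).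
  by move=> x _; exact: continuous_dotvv.
exact: closed_le.
Qed.

Lemma closed_dotvv_ge (c : R) : closed [set x : V | c <= dotv x x].
Proof.
apply: (@preimage_closed _ _ (fun x : V => dotv x x) [set r | c <= r]).
  by move=> x _; exact: continuous_dotvv.
exact: closed_ge.
Qed.

Lemma bounded_dotvv_le A (c : R) :
  (forall x, A x -> dotv x x <= c) -> bounded_set A.
Proof.
move=> Ac; exists (1 + `|c|); split; first by rewrite num_real.
move=> M /ltW leM x /Ac xc; apply: le_trans leM.
change (mx_norm x <= 1 + `|c|); rewrite mx_normrE.
apply: bigmax_le => [|[i j] _ /=]; first by rewrite addr_ge0.
rewrite (ord1 i).
have xj : `|x ord0 j| ^+ 2 <= dotv x x.
  rewrite real_normK ?num_real // /dotv (bigD1 j) //= -expr2 lerDl.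
  by apply: sumr_ge0 => k _; rewrite -expr2 sqr_ge0.
have := ler_norm c; rewrite expr2 in xj; nra.
Qed.

Lemma compact_sphereI E (r : R) :
  closed E -> 0 <= r -> compact (E `&` [set x | enorm x = r]).
Proof.
move=> cE r0.
have -> : E `&` [set x | enorm x = r] =
    E `&` ([set x | dotv x x <= r ^+ 2] `&` [set x | r ^+ 2 <= dotv x x]).
  apply/seteqP; split => x [Ex xr]; split => //=.
    by move/(enorm_eq_sq _ r0): xr => ->; rewrite lexx.
  by apply/(enorm_eq_sq _ r0)/eqP; rewrite eq_le; case: xr => /= -> ->.
apply: bounded_closed_compact.
  by apply: (bounded_dotvv_le (c := r ^+ 2)) => x [_ []].
by apply: closedI => //; apply: closedI; [exact: closed_dotvv_le|exact: closed_dotvv_ge].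
Qed.

Definition convn n A : set V :=
  [set x | exists (w : 'I_n -> R) (p : 'I_n -> V),
     (forall i, 0 <= w i) /\ \sum_(i < n) w i = 1 /\ (forall i, A (p i)) /\
     x = \sum_(i < n) w i *: p i].

Lemma convn1 A : convn 1 A = A.
Proof.
apply/seteqP; split => [x [w [p [_ [w1 [Ap ->]]]]]|y Ay].
  by move: w1; rewrite !big_ord1 => ->; rewrite scale1r.
exists (fun=> 1), (fun=> y); split => //; split; first by rewrite big_ord1.
by split => //; rewrite big_ord1 scale1r.
Qed.

Lemma convn_lerp n A z y (s : R) : convn n A z -> A y -> 0 <= s <= 1 ->
  convn n.+1 A ((1 - s) *: z + s *: y).
Proof.
move=> [w [p [w0 [w1 [Ap ->]]]]] Ay /andP[s0 s1].
exists (fun i => oapp (fun k => (1 - s) * w k) s (unlift ord_max i)).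
exists (fun i => oapp p y (unlift ord_max i)).
rewrite !(bigD1_ord ord_max) //= !unlift_none /=.
rewrite (eq_bigr (fun k => (1 - s) * w k)); last by move=> k _; rewrite liftK.
split; first by case=> i ? /=; case: unlift => /= *; rewrite ?mulr_ge0 ?subr_ge0.
split; first by rewrite -mulr_sumr w1 mulr1 addrC subrK.
split; first by move=> i; case: unlift.
rewrite addrC scaler_sumr; congr (_ + _).
by apply: eq_bigr => k _; rewrite liftK scalerA.
Qed.

Lemma convn_leq n m A x y : A y -> (n <= m)%N -> convn n A x -> convn m A x.
Proof.
move=> Ay /subnK <-; elim: (m - n)%N => [//|k IH] /IH xk; rewrite addSn.
have := convn_lerp xk Ay (s := 0).
by rewrite subr0 scale1r scale0r addr0 lexx ler01; apply.
Qed.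

Definition lerp (q : V * (V * R)) : V := (1 - q.2.2) *: q.1 + q.2.2 *: q.2.1.

Lemma continuous_lerp : continuous lerp.
Proof.
move=> q.
have q2 : {for q, continuous (fun q : V * (V * R) => q.2)} by exact: cvg_snd.
have q21 : {for q, continuous (fun q : V * (V * R) => q.2.1)}.
  by apply: (continuous_comp q2); exact: cvg_fst.
have q22 : {for q, continuous (fun q : V * (V * R) => q.2.2)}.
  by apply: (continuous_comp q2); exact: cvg_snd.
apply: cvgD; apply: cvgZ => //; last exact: cvg_fst.
by apply: cvgB => //; exact: cvg_cst.
Qed.

Lemma convnSS n A :
  convn n.+2 A = lerp @` (convn n.+1 A `*` (A `*` `[0, 1]%classic)).
Proof.
apply/seteqP; split => x; last first.
  move=> [[z [y s]] [/= zA [/= yA]]]; rewrite /= in_itv /= => s01 <-.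
  exact: convn_lerp.
move=> [w [p [w0 [w1 [Ap ->]]]]].
rewrite (bigD1_ord ord_max) //= in w1; rewrite (bigD1_ord ord_max) //=.
set s := w ord_max in w1 *; set W := \sum_(k < n.+1) _ in w1.
have W0 : 0 <= W by apply: sumr_ge0.
have s01 : 0 <= s <= 1 by rewrite w0 /=; lra.
have [s1|s_neq1] := eqVneq s 1.
  (* all the weight sits on the last point, so any [z] will do *)
  have W_eq0 : W = 0 by lra.
  have wk0 := psumr_eq0P (fun k _ => w0 (lift ord_max k)) W_eq0.
  exists (p ord_max, (p ord_max, s)).
    split; last by split; rewrite //= in_itv.
    by apply: (convn_leq (n := 1) (Ap ord_max)) => //=; rewrite convn1.
  rewrite /lerp /= big1 ?addr0 => [|k _]; last by rewrite wk0 ?scale0r.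
  by rewrite s1 subrr scale0r add0r.
have W_pos : 0 < W by rewrite lt_def W0 andbT; apply: contra_neq s_neq1 => ?; lra.
pose z := \sum_(k < n.+1) (w (lift ord_max k) / W) *: p (lift ord_max k).
exists (z, (p ord_max, s)); last first.
  rewrite /lerp /= addrC (_ : 1 - s = W); last by lra.
  by rewrite scaler_sumr; congr (_ + _); apply: eq_bigr => k _;
    rewrite scalerA mulrC divfK ?gt_eqF.
split; last by split; rewrite //= in_itv.
exists (fun k => w (lift ord_max k) / W), (fun k => p (lift ord_max k)).
split; first by move=> k; apply: divr_ge0 => //; exact: ltW.
by rewrite -mulr_suml mulfV ?gt_eqF.
Qed.

Lemma compact_convn n A : compact A -> compact (convn n.+1 A).
Proof.
move=> cA; elim: n => [|n IH]; first by rewrite convn1.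
rewrite convnSS; apply: continuous_compact.
  exact: continuous_subspaceT continuous_lerp.
by apply: compact_setX => //; apply: compact_setX => //; exact: segment_compact.
Qed.

Lemma affine_dependent n (p : 'I_n -> V) : (d.+1 < n)%N ->
  exists mu : 'I_n -> R,
    (exists i, 0 < mu i) /\ \sum_i mu i = 0 /\ \sum_i mu i *: p i = 0.
Proof.
move=> dn.
(* the [n > 1 + d] rows [(1, p i)] of [M] are linearly dependent *)
pose M := row_mx (const_mx 1 : 'M[R]_(n, 1)) (\matrix_(i, j) p i ord0 j).
have [u [u0 uM]] : exists u : 'rV[R]_n, u != 0 /\ u *m M = 0.
  have : ~~ row_free M.
    by rewrite /row_free neq_ltn (leq_ltn_trans (rank_leq_col M)).
  apply: contraNP => no_u; apply: inj_row_free => u uM.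
  by apply: contrapT => u0; apply: no_u; exists u; split => //; apply/eqP.
move: uM; rewrite mul_mx_row => /eqP; rewrite row_mx_eq0 => /andP[/eqP u1 /eqP up].
have u_sum : \sum_i u ord0 i = 0.
  transitivity ((u *m (const_mx 1 : 'cV[R]_n)) ord0 ord0); last by rewrite u1 mxE.
  by rewrite mxE; apply: eq_bigr => i _; rewrite mxE mulr1.
exists (u ord0); split; last split => //.
  apply: contrapT => u_le0.
  have u_ge0 i : 0 <= - u ord0 i.
    by rewrite oppr_ge0 leNgt; apply/negP => ?; apply: u_le0; exists i.
  have /psumr_eq0P u_eq0 : \sum_i - u ord0 i = 0 by rewrite sumrN u_sum oppr0.
  move/negP: u0; apply; apply/eqP/rowP => i; rewrite mxE.
  by apply/eqP; rewrite -oppr_eq0 u_eq0.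
apply/rowP => j; rewrite summxE mxE.
transitivity ((u *m \matrix_(i, j) p i ord0 j) ord0 j); last by rewrite up mxE.
by rewrite mxE; apply: eq_bigr => i _; rewrite !mxE.
Qed.

Lemma convn_pred n A x : (d.+1 < n)%N -> convn n A x -> convn n.-1 A x.
Proof.
case: n => [//|n] dn [w [p [w0 [w1 [Ap ->]]]]] /=.
have [mu [[i0 mu_i0] [mu_sum mu_comb]]] := affine_dependent p dn.
have [j mu_j jmin] :=
  @arg_minP _ _ _ i0 (fun i => 0 < mu i) (fun i => w i / mu i) mu_i0.
(* move the weights along [- mu] until the first one vanishes *)
set t := w j / mu j in jmin.
pose w' i := w i - t * mu i.
have w'_ge0 i : 0 <= w' i.
  rewrite /w' subr_ge0; have [mu_i|mu_le0] := ltrP 0 (mu i).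
    by rewrite -ler_pdivlMr //; exact: jmin.
  by apply: le_trans (w0 i); apply: mulr_ge0_le0 => //; exact: divr_ge0 (w0 j) (ltW mu_j).
have w'j : w' j = 0 by rewrite /w' /t divfK ?subrr ?gt_eqF.
have w'_sum : \sum_i w' i = 1 by rewrite sumrB -mulr_sumr mu_sum mulr0 subr0.
have w'_comb : \sum_i w' i *: p i = \sum_i w i *: p i.
  under eq_bigr do rewrite scalerBl -scalerA.
  by rewrite sumrB -scaler_sumr mu_comb scaler0 subr0.
rewrite -w'_comb (bigD1_ord j) //= w'j scale0r add0r.
exists (fun k => w' (lift j k)), (fun k => p (lift j k)); do !split => //.
by rewrite -w'_sum (bigD1_ord j) //= w'j add0r.
Qed.

Lemma caratheodory A x y : A y -> convhull A x -> convn d.+1 A x.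
Proof.
move=> Ay [n]; elim/ltn_ind: n => n IH xn.
have [n_le|dn] := leqP n d.+1; first exact: convn_leq Ay n_le xn.
by apply: (IH n.-1); [rewrite ltn_predL (ltn_trans _ dn)|exact: convn_pred].
Qed.

Lemma compact_convhull A : compact A -> A !=set0 -> compact (convhull A).
Proof.
move=> cA [y Ay]; have -> : convhull A = convn d.+1 A.
  by apply/seteqP; split => x; [exact: caratheodory Ay|exists d.+1].
exact: compact_convn.
Qed.

Lemma convhull_convn n A x : convn n A x -> convhull A x.
Proof. by exists n. Qed.

Lemma subset_convhull A : A `<=` convhull A.
Proof. by move=> y Ay; apply: (@convhull_convn 1); rewrite convn1. Qed.

Lemma convhull_lerp A x y (s : R) : convhull A x -> A y -> 0 <= s <= 1 ->
  convhull A ((1 - s) *: x + s *: y).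
Proof. by move=> [n xn] Ay s01; apply: (@convhull_convn n.+1); exact: convn_lerp. Qed.

Lemma linear_coef_ge0 (b c : R) :
  (forall s, 0 < s <= 1 -> 0 <= 2 * s * b + s ^+ 2 * c) -> 0 <= b.
Proof.
move=> quad_ge0; rewrite leNgt; apply/negP => b_lt0.
have c1 : 0 < `|c| + 1 by rewrite ltr_wpDl.
pose s := Num.min 1 (- b / (`|c| + 1)).
have s_gt0 : 0 < s by rewrite lt_min ltr01 divr_gt0 // oppr_gt0.
have s_le1 : s <= 1 by rewrite ge_min lexx.
have sc : s * (`|c| + 1) <= - b by rewrite -ler_pdivlMr // ge_min lexx orbT.
have := quad_ge0 s; rewrite s_gt0 s_le1 => /(_ isT).
have := ler_norm c; rewrite expr2; nra.
Qed.

Lemma gordan G : compact G -> G !=set0 -> ~ convhull G 0 ->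
  exists v, forall y, G y -> dotv y v < 0.
Proof.
move=> cG G0 G0n; have [y0 Gy0] := G0.
have [z /set_mem zG zmin] := compact_EVT_min (ex_intro _ y0 (subset_convhull Gy0))
  (compact_convhull cG G0) (continuous_subspaceT continuous_dotvv).
have z0 : z != 0 by apply: contraPneq G0n => <-.
exists (- z) => y Gy; rewrite dotvNr dotvC oppr_lt0.
have : 0 <= dotv z (y - z).
  have segment_in s : 0 < s <= 1 -> convhull G (z + s *: (y - z)).
    move=> /andP[s0 s1]; rewrite (_ : z + _ = (1 - s) *: z + s *: y).
      by apply: convhull_lerp; rewrite ?s1 ?ltW.
    by rewrite scalerBr scalerBl scale1r addrCA addrC.
  move: (y - z) segment_in => u segment_in.
  apply: (linear_coef_ge0 (c := dotv u u)) => s /segment_in/mem_set/zmin.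
  rewrite !(dotvDl, dotvDr, dotvZl, dotvZr) (dotvC u z) expr2; lra.
rewrite dotvBr; have := dotvv_gt0 z0; lra.
Qed.

Lemma convhull_ray_cone_conic A x0 n (lam : 'I_n -> R) (q : 'I_n -> V) :
  A x0 -> (forall i, 0 <= lam i) -> (forall i, A (q i)) ->
  convhull (ray_cone A) (\sum_i lam i *: q i).
Proof.
move=> Ax0; case: n lam q => [|m] lam q lam0 Aq.
  by rewrite big_ord0; apply: subset_convhull; exists 0, x0; rewrite scale0r.
have m0 : m.+1%:R != 0 :> R by rewrite pnatr_eq0.
exists m.+1, (fun=> m.+1%:R^-1), (fun i => (m.+1%:R * lam i) *: q i).
split; first by move=> i; rewrite invr_ge0 ler0n.
split; first by rewrite sumr_const card_ord -[_ *+ _]mulr_natr mulVf.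
split; first by move=> i; exists (m.+1%:R * lam i), (q i); rewrite mulr_ge0 ?ler0n.
by apply: eq_bigr => i _; rewrite scalerA mulrA mulVf ?mul1r.
Qed.

Lemma convhull_setU1 A b x x0 : A x0 -> convhull (A `|` [set b]) x ->
  exists n (lam : 'I_n -> R) (q : 'I_n -> V) (s : R),
    [/\ forall i, 0 <= lam i, forall i, A (q i), 0 <= s,
        \sum_i lam i + s = 1 & x = \sum_i lam i *: q i + s *: b].
Proof.
move=> Ax0 [n [w [p [w0 [w1 [Ap ->]]]]]].
exists n, (fun i => if p i == b then 0 else w i), (fun i => if p i == b then x0 else p i).
pose s := \sum_i if p i == b then w i else 0.
exists s; split.
- by move=> i; case: ifP.
- by move=> i; case: ifPn => // /eqP pb; case: (Ap i).
- by apply: sumr_ge0 => i _; case: ifP.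
- rewrite -w1 -big_split; apply: eq_bigr => i _ /=.
  by case: ifP => _; rewrite ?add0r ?addr0.
rewrite /s scaler_suml -big_split; apply: eq_bigr => i _ /=.
by case: ifPn => [/eqP <-|_]; rewrite scale0r ?add0r ?addr0.
Qed.

Lemma not_convhull_ray_coneU_opp A a x0 : A x0 -> ~ A 0 ->
  pointed (convhull (ray_cone A)) -> ~ convhull (ray_cone A) a ->
  ~ convhull (A `|` [set - a]) 0.
Proof.
move=> Ax0 A0 pointedC aC /(convhull_setU1 Ax0) [n [lam [q [s [lam0 Aq s0 sum1 comb0]]]]].
have comb : \sum_i lam i *: q i = s *: a.
  by apply/eqP; rewrite -subr_eq0 -scalerN -comb0.
have [s_gt0|s_le0] := ltrP 0 s.
  apply: aC; have -> : a = \sum_i (lam i / s) *: q i.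
    rewrite -[a](scalerK (negbT (gt_eqF s_gt0))) -comb scaler_sumr.
    by apply: eq_bigr => i _; rewrite scalerA mulrC.
  by apply: (convhull_ray_cone_conic Ax0) => // i; apply: divr_ge0 => //; exact: ltW.
have s_eq0 : s = 0 by apply/eqP; rewrite eq_le s_le0 s0.
rewrite s_eq0 scale0r in comb; rewrite s_eq0 addr0 in sum1.
have [j /andP[_ lam_j]] : exists j, true && (0 < lam j).
  by apply: (psumr_neq0P (fun i _ => lam0 i)); rewrite sum1; exact/eqP/oner_neq0.
pose y := lam j *: q j.
have Cy : convhull (ray_cone A) y by apply: subset_convhull; exists (lam j), (q j).
have Cny : convhull (ray_cone A) (- y).
  have -> : - y = \sum_i (if i == j then 0 else lam i) *: q i.
    move/eqP: comb; rewrite (bigD1 j) //= addr_eq0 /y => /eqP ->.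
    by rewrite opprK [RHS](bigD1 j) //= eqxx scale0r add0r;
      apply: eq_bigr => i /negbTE ->.
  by apply: (convhull_ray_cone_conic Ax0) => // i; case: ifP.
have : [set x | convhull (ray_cone A) x /\ convhull (ray_cone A) (- x)] y by [].
rewrite pointedC /= => /eqP; rewrite scaler_eq0 (gt_eqF lam_j) /= => /eqP qj0.
by apply: A0; rewrite -qj0.
Qed.

Lemma unit_sphere_normalize v : v != 0 -> unit_sphere ((enorm v)^-1 *: v).
Proof.
move=> v0; rewrite unit_sphereE dotvZl dotvZr mulrA -expr2 exprVn enorm_sq.
by rewrite mulVf // gt_eqF // dotvv_gt0.
Qed.

Lemma pointed_convhull_ray_cone_nonempty A :
  pointed (convhull (ray_cone A)) -> A !=set0.
Proof.
move=> pointedC.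
have : [set x | convhull (ray_cone A) x /\ convhull (ray_cone A) (- x)] 0.
  by rewrite pointedC.
move=> [[[|n] [w [p [_ [w1 [Ap _]]]]]] _].
  by move: w1; rewrite big_ord0 => /eqP; rewrite eq_sym oner_eq0.
by have [lam [x [_ [Ax _]]]] := Ap ord0; exists x.
Qed.

Lemma separating_unit_vector A a x0 : compact A -> A x0 -> ~ A 0 ->
  pointed (convhull (ray_cone A)) -> ~ convhull (ray_cone A) a ->
  exists v, unit_sphere v /\ 0 < dotv a v /\ forall x, A x -> dotv x v < 0.
Proof.
move=> cA Ax0 A0 pointedC aC.
have cAa : compact (A `|` [set - a]) by apply: compactU => //; exact: compact_set1.
have [v0 v0_sep] := gordan cAa
  (ex_intro _ x0 (or_introl Ax0)) (not_convhull_ray_coneU_opp Ax0 A0 pointedC aC).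
have av0 : 0 < dotv a v0.
  by rewrite -oppr_lt0 -dotvNl; apply: v0_sep; right.
have v00 : v0 != 0 by apply: contraTneq av0 => ->; rewrite dotv0r ltxx.
have k0 : 0 < (enorm v0)^-1 by rewrite invr_gt0 sqrtr_gt0 dotvv_gt0.
exists ((enorm v0)^-1 *: v0); split; first exact: unit_sphere_normalize.
split; first by rewrite dotvZr mulr_gt0.
by move=> x Ax; rewrite dotvZr pmulr_rlt0 // v0_sep //; left.
Qed.

Lemma eball_shift_mem r a v (t : R) : 0 < r -> enorm a = r -> unit_sphere v ->
  0 < t < 2 * dotv a v -> eball (t *: v) r a.
Proof.
move=> r0 ar /unit_sphereE v1 /andP[t0 t_lt]; apply/enorm_lt_sq; split => //.
have /(enorm_eq_sq _ (ltW r0)) aa := ar.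
rewrite dotvBl !dotvBr !dotvZl !dotvZr v1 aa (dotvC v a).
have : t * t < t * (2 * dotv a v) by rewrite ltr_pM2l.
lra.
Qed.

Lemma sphere_gap E r v (c : R) : 0 <= r -> closed E ->
  (forall x, E x -> r ^+ 2 <= dotv x x) ->
  (forall x, E x -> enorm x = r -> dotv x v < 0) ->
  exists2 m, 0 < m & forall x, E x -> 0 <= dotv x v -> dotv x x <= c ->
    r ^+ 2 + m <= dotv x x.
Proof.
move=> r0 cE E_out E_sphere.
pose K := E `&` ([set x | 0 <= dotv x v] `&` [set x | dotv x x <= c]).
have [K0|/set0P/negP/negPn/eqP K0] := pselect (K !=set0); last first.
  by exists 1 => // x Ex xv xc; have : K x by []; rewrite K0.
have cK : compact K.
  apply: bounded_closed_compact; first by apply: (bounded_dotvv_le (c := c)) => x [_ []].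
  by apply: closedI => //; apply: closedI; [exact: closed_dotvl_ge|exact: closed_dotvv_le].
have [z /set_mem [Ez [/= zv _]] zmin] :=
  compact_EVT_min K0 cK (continuous_subspaceT continuous_dotvv).
exists (dotv z z - r ^+ 2) => [|x Ex xv xc]; last first.
  by rewrite addrC subrK; apply: zmin; apply/mem_set.
rewrite subr_gt0 lt_def E_out // andbT; apply: contraTneq zv => zr.
by rewrite -ltNge; apply: E_sphere => //; apply/enorm_eq_sq.
Qed.

Lemma eball_shift_disjoint E r v : 0 < r -> closed E -> unit_sphere v ->
  (forall x, E x -> r ^+ 2 <= dotv x x) ->
  (forall x, E x -> enorm x = r -> dotv x v < 0) ->
  exists2 t0, 0 < t0 & forall t, 0 < t < t0 -> eball (t *: v) r `&` E = set0.
Proof.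
move=> r0 cE v1 E_out E_sphere.
have [m m0 gap] := sphere_gap ((r + 1) ^+ 2) (ltW r0) cE E_out E_sphere.
(* Up to [|x| <= r + 1] the gap [m] absorbs the loss [2 t <x, v> <= 2 t (r + 1)];
   farther points keep [|x - t v| >= |x| - t > r]. *)
exists (Num.min 1 (m / (2 * (r + 1)))).
  by rewrite lt_min ltr01 divr_gt0 //; lra.
move=> t /andP[t0]; rewrite lt_min => /andP[t1].
rewrite ltr_pdivlMr; last by lra.
move=> tm; apply/seteqP; split => x // [/enorm_lt_sq [_]].
have /unit_sphereE vv := v1.
rewrite dotvBl !dotvBr !dotvZl !dotvZr vv (dotvC v x) => xt Ex.
have xx := E_out x Ex; have xv := dotv_le_enorm x v1.
have n0 := enorm_ge0 x; have nx := enorm_sq x.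
have [xv_le0|xv_gt0] := lerP (dotv x v) 0; first by nra.
have [n_le|n_gt] := lerP (enorm x) (r + 1); last by nra.
have xc : dotv x x <= (r + 1) ^+ 2 by rewrite -nx; nra.
have := gap x Ex (ltW xv_gt0) xc; nra.
Qed.

Lemma subset_hulloid (r : R) E : E `<=` hulloid r E.
Proof. by move=> x Ex c /= cE xc; have : (eball c r `&` E) x by []; rewrite cE. Qed.

Lemma not_eball_of_hulloid (r : R) E c x :
  eball c r `&` hulloid r E = set0 -> E x -> ~ eball c r x.
Proof.
move=> ball_hulloid Ex xc; suff : (eball c r `&` hulloid r E) x by rewrite ball_hulloid.
by split => //; exact: subset_hulloid.
Qed.

End Euclidean.

Theorem mainTheorem3 (R : realType) (d : nat) (Rad : R) (E : set 'rV[R]_d)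
    (a : 'rV[R]_d) :
  0 < Rad -> body E ->
  bdry (hulloid Rad E) a ->
  enorm a = Rad -> eball 0 Rad `&` hulloid Rad E = set0 ->
  let FF := E `&` [set x | enorm x = Rad] in
  let C := convhull (ray_cone FF) in
  pointed C -> ~ C a ->
  let P := fun v => unit_sphere v /\ 0 < dotv a v /\ (forall x, FF x -> dotv x v < 0) in
  (exists v, P v) /\
  (forall v, P v -> exists t0 : R, 0 < t0 /\
     forall t : R, 0 < t < t0 ->
       eball (t *: v) Rad a /\ eball (t *: v) Rad `&` E = set0).
Proof.
move=> R0 [_ cE] _ aR ball_hulloid FF C pointedC aC P.
have E_out x : E x -> Rad ^+ 2 <= dotv x x.
  move=> Ex; rewrite leNgt; apply/negP => xR.
  by apply: (not_eball_of_hulloid ball_hulloid Ex); apply/enorm_lt_sq; rewrite subr0.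
split.
  have [x0 FFx0] := pointed_convhull_ray_cone_nonempty pointedC.
  apply: (separating_unit_vector _ FFx0) pointedC aC.
    exact: compact_sphereI (ltW R0).
  by move=> [_ /= R0']; move: R0; rewrite -R0' enorm0 ltxx.
move=> v [v1 [av v_sep]].
have [t1 t1_gt0 t1_disj] :=
  eball_shift_disjoint R0 cE v1 E_out (fun x Ex xR => v_sep x (conj Ex xR)).
exists (Num.min t1 (2 * dotv a v)); split; first by rewrite lt_min t1_gt0 mulr_gt0.
move=> t /andP[t0]; rewrite lt_min => /andP[tt1 ta]; split.
  by apply: eball_shift_mem => //; rewrite t0 ta.
by apply: t1_disj; rewrite t0.
Qed.
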